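(* Let $\overrightarrow{C}$ be an oriented 2-regular graph with at least two cycle components, each of which is either unidirectional or $\Theta$-oriented. Then $\overrightarrow{C}$ is $\{1\}$-antimagic if and only if at most one of its cycle components is $\Theta$-oriented (and all others are unidirectional).
   Context: An oriented graph is a simple graph each of whose edges is given one direction (an arc $(u,v)$ goes from $u$ to $v$). For vertices $u,v$, $d(u,v)$ is the length of a shortest directed path from $u$ to $v$ ($d(u,u)=0$, $\infty$ if no path). For a set $D$ of nonnegative integers, $N_D(v)=\{y : d(v,y)\in D\}$; for a bijection $f:V\to\{1,\dots,|V|\}$, $\omega_D(v)=\sum_{x\in N_D(v)}f(x)$ (empty sum $0$); $f$ is $D$-antimagic if distinct vertices have distinct $D$-weights, and the graph is $D$-antimagic if such an $f$ exists. An oriented 2-regular graph is an orientation of a disjoint union of cycles, each of length at least $3$. A cycle component on $v_1,\dots,v_n$ is unidirectional if (up to relabeling) its arcs are $(v_i,v_{i+1})$, $1\le i\le n-1$, and $(v_n,v_1)$; it is $\Theta$-oriented if it has exactly one source (in-degree $0$) and exactly one sink (out-degree $0$) and these are adjacent, i.e. up to relabeling its arcs are $(v_i,v_{i+1})$, $1\le i\le n-1$, and $(v_1,v_n)$. *)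

From mathcomp Require Import all_boot.
Set Implicit Arguments. Unset Strict Implicit. Unset Printing Implicit Defensive.

Section Defs.
Variable V : finType.
Variable a : rel V.  (* arc relation: a u v means arc (u,v) *)

Definition oriented : Prop :=
  (forall x, ~~ a x x) /\ (forall x y, a x y -> ~~ a y x).

Definition und : rel V := fun x y => a x y || a y x.

Definition two_regular : Prop := forall x, #|[set y | und x y]| = 2.

Definition comp (x : V) : {set V} := [set y | connect und x y].
Definition components : {set {set V}} := [set comp x | x in V].

Definition path_arc (s : seq V) (x y : V) : Prop :=
  exists i, i.+1 < size s /\ nth x s i = x /\ nth x s i.+1 = y.

Definition unidirectional (C : {set V}) : Prop :=
  exists s : seq V, [/\ uniq s, 3 <= size s, (forall x, x \in C <-> x \in s) &
    forall x y, x \in C -> y \in C ->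
      (a x y <-> path_arc s x y \/ (x = last x s /\ y = head x s))].

Definition theta_oriented (C : {set V}) : Prop :=
  exists s : seq V, [/\ uniq s, 3 <= size s, (forall x, x \in C <-> x \in s) &
    forall x y, x \in C -> y \in C ->
      (a x y <-> path_arc s x y \/ (x = head x s /\ y = last x s))].

Fixpoint reach (k : nat) (u v : V) : bool :=
  if k is k'.+1 then [exists w, a u w && reach k' w v] else u == v.

Definition dist_is (u v : V) (k : nat) : bool :=
  reach k u v && [forall j : 'I_k, ~~ reach j u v].

(* N_D(v) = { y | d(v,y) \in D }; finite distances are < #|V| *)
Definition ND (D : pred nat) (v : V) : {set V} :=
  [set y | [exists k : 'I_#|V|, (D k) && dist_is v y k]].

Definition weight (D : pred nat) (f : V -> nat) (v : V) : nat :=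
  \sum_(x in ND D v) f x.

Definition labeling (f : V -> nat) : Prop :=
  injective f /\ (forall x, 1 <= f x <= #|V|) /\
  (forall k, 1 <= k <= #|V| -> exists x, f x = k).

Definition D_antimagic (D : pred nat) : Prop :=
  exists f, labeling f /\ injective (weight D f).

End Defs.

From Pilot Require Import Defs.
From mathcomp Require Import all_boot fingroup perm zify.
From Stdlib Require Import Classical.

(* For D = {1} and an irreflexive arc relation, N_D(v) is the out-neighbourhood
   of v, so the weight of v sums the labels of its out-neighbours.  In a
   unidirectional cycle every vertex has one out- and one in-neighbour; in a
   Theta-oriented cycle the same holds except at the source (two out-neighbours)
   and at the sink (no out-neighbour; its in-neighbours are its predecessor and
   the source).  Two Theta components would thus give two sinks of weight 0.
   Conversely, vertices with a single out-neighbour have pairwise distinct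
   out-neighbours, hence distinct weights under any labeling; if there is a Theta
   component, giving the labels |V| and |V|-1 to the out-neighbours of its source
   makes the source heavier, and the sink lighter, than every other vertex. *)

Set Implicit Arguments. Unset Strict Implicit. Unset Printing Implicit Defensive.

Section OutSets.
Variable V : finType.
Implicit Types (a : rel V) (v : V).

Definition out_set a v : {set V} := [set y | a v y].

Lemma ND1_out_set a v : 1 < #|V| -> (forall x, ~~ a x x) ->
  ND a (pred1 1) v = out_set a v.
Proof.
move=> V_gt1 a_irr; apply/setP => y; rewrite !inE.
apply/existsP/idP => [[k /andP[/eqP-> /andP[]]] | avy] /=.
  by case/existsP=> w /andP[avw /eqP<-].
exists (Ordinal V_gt1); rewrite /dist_is /=; apply/andP; split.
  by apply/existsP; exists y; rewrite avy eqxx.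
apply/forallP => -[[|j] lt_j] //=; apply: contra (a_irr v) => /eqP vy.
by rewrite {2}vy.
Qed.

Section Weight1.
Variables (a : rel V) (f : V -> nat).
Hypotheses (V_gt1 : 1 < #|V|) (a_irr : forall x, ~~ a x x).

Lemma weight1E v : weight a (pred1 1) f v = \sum_(y in out_set a v) f y.
Proof. by rewrite /weight ND1_out_set. Qed.

Lemma weight1_set0 v : out_set a v = set0 -> weight a (pred1 1) f v = 0.
Proof. by move=> Ov; rewrite weight1E Ov big_set0. Qed.

Lemma weight1_set1 v y : out_set a v = [set y] -> weight a (pred1 1) f v = f y.
Proof. by move=> Ov; rewrite weight1E Ov big_set1. Qed.

Lemma weight1_set2 v y z : out_set a v = [set y; z] -> y != z ->
  weight a (pred1 1) f v = f y + f z.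
Proof. by move=> Ov yz; rewrite weight1E Ov big_setU1 ?big_set1 ?inE. Qed.

End Weight1.

End OutSets.

Section Components.
Variable V : finType.
Implicit Types (a : rel V) (x y : V).

Lemma und_sym a : symmetric (und a).
Proof. by move=> x y; rewrite /und orbC. Qed.

Lemma comp_refl a x : x \in Defs.comp a x.
Proof. by rewrite inE connect0. Qed.

Lemma comp_in_components a x : Defs.comp a x \in components a.
Proof. exact: imset_f. Qed.

Lemma components_arc a C x y : C \in components a -> a x y -> (x \in C) = (y \in C).
Proof.
case/imsetP=> z _ -> axy; rewrite !inE.
apply: same_connect_r; first exact/sym_connect_sym/und_sym.
by apply: connect1; rewrite /und axy.
Qed.

Lemma components_compE a C x : C \in components a -> x \in C -> C = Defs.comp a x.
Proof.
case/imsetP=> z _ ->; rewrite inE => zx; apply/setP => y; rewrite !inE.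
by rewrite (same_connect (sym_connect_sym (und_sym a)) zx).
Qed.

End Components.

Section CycleSequences.
Variables (V : finType) (a : rel V).
Implicit Types (s : seq V) (x y u v : V).

(* Stated over [V] rather than an eqType, so that [lia] sees the same [size s]
   atom here as in the hypotheses on [size s] (the two differ by a coercion). *)
Lemma index_lt_size s x : x \in s -> index x s < size s.
Proof. by rewrite index_mem. Qed.

Lemma path_arc_index s x y : uniq s -> x \in s -> y \in s ->
  path_arc s x y <-> index y s = (index x s).+1.
Proof.
move=> s_uniq xs ys; split=> [[i [lt_i [ix iy]]] | iy].
  have -> : index x s = i by rewrite -ix index_uniq // ltnW.
  by rewrite -iy index_uniq.
exists (index x s); rewrite nth_index //; split; first by rewrite -iy index_mem.
by split=> //; rewrite -iy nth_index.
Qed.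

Lemma head_index s x y : uniq s -> y \in s -> y = head x s <-> index y s = 0.
Proof.
move=> s_uniq ys; have s_gt0 : 0 < size s by case: (s) ys.
rewrite -nth0; split=> [-> | iy]; first exact: index_uniq.
by rewrite -iy nth_index.
Qed.

Lemma last_index s x y : uniq s -> y \in s -> y = last x s <-> index y s = (size s).-1.
Proof.
move=> s_uniq ys; have s_gt0 : 0 < size s by case: (s) ys.
rewrite -nth_last; split=> [-> | iy]; first by rewrite index_uniq // prednK.
by rewrite -iy nth_index.
Qed.

Definition arcs_on s (R : rel nat) :=
  forall x y, (x \in s) || (y \in s) ->
    a x y = [&& x \in s, y \in s & R (index x s) (index y s)].

Lemma component_arcs_on C s (R : rel nat) :
  C \in components a -> (forall x, x \in C <-> x \in s) ->
  (forall x y, x \in s -> y \in s -> a x y <-> R (index x s) (index y s)) ->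
  arcs_on s R.
Proof.
move=> HC Cs sR x y; case: (boolP (x \in s)) => xs; case: (boolP (y \in s)) => ys //= _.
- by apply/idP/idP => /sR->.
- apply/negbTE/negP => /(components_arc HC); move/Cs: xs => -> /esym /Cs.
  by rewrite (negbTE ys).
- apply/negbTE/negP => /(components_arc HC); move/Cs: ys => -> /Cs.
  by rewrite (negbTE xs).
Qed.

(* Position relations of the arcs of a unidirectional and of a Theta-oriented
   cycle listed as [v_0; ...; v_(n-1)]. *)
Definition cycle_succ n i j := (j == i.+1) || (i == n.-1) && (j == 0).
Definition theta_succ n i j := (j == i.+1) || (i == 0) && (j == n.-1).

Lemma unidirectional_arcs_on C : C \in components a -> unidirectional a C ->
  exists s, [/\ uniq s, 3 <= size s, forall x, x \in C <-> x \in s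
              & arcs_on s (cycle_succ (size s))].
Proof.
move=> HC [s [s_uniq s_ge3 Cs sa]]; exists s; split=> //.
apply: (component_arcs_on HC Cs) => x y xs ys.
rewrite (sa x y (proj2 (Cs x) xs) (proj2 (Cs y) ys)) path_arc_index //.
rewrite (last_index x s_uniq xs) (head_index x s_uniq ys) /cycle_succ; split; lia.
Qed.

Lemma theta_arcs_on C : C \in components a -> theta_oriented a C ->
  exists s, [/\ uniq s, 3 <= size s, forall x, x \in C <-> x \in s
              & arcs_on s (theta_succ (size s))].
Proof.
move=> HC [s [s_uniq s_ge3 Cs sa]]; exists s; split=> //.
apply: (component_arcs_on HC Cs) => x y xs ys.
rewrite (sa x y (proj2 (Cs x) xs) (proj2 (Cs y) ys)) path_arc_index //.
rewrite (head_index x s_uniq xs) (last_index x s_uniq ys) /theta_succ; split; lia.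
Qed.

Section ArcsOn.
Variables (s : seq V) (R : rel nat).
Hypotheses (s_uniq : uniq s) (sR : arcs_on s R).

Lemma set_index x0 k : k < size s ->
  [set y | (y \in s) && (index y s == k)] = [set nth x0 s k].
Proof.
move=> lt_k; apply/setP => y; rewrite !inE.
apply/andP/eqP => [[ys /eqP<-] | ->]; first by rewrite nth_index.
by rewrite mem_nth // index_uniq.
Qed.

Lemma arcs_on_out x : x \in s ->
  out_set a x = [set y | (y \in s) && R (index x s) (index y s)].
Proof. by move=> xs; apply/setP => y; rewrite !inE sR ?xs. Qed.

Lemma arcs_on_in u y : y \in s -> a u y -> (u \in s) && R (index u s) (index y s).
Proof. by move=> ys; rewrite sR ?ys ?orbT // => /and3P[-> _ ->]. Qed.

End ArcsOn.

Section Unidirectional.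
Variable s : seq V.
Hypotheses (s_uniq : uniq s) (s_cycle : arcs_on s (cycle_succ (size s))).

Lemma cycle_out_set1 x : x \in s -> exists y, out_set a x = [set y].
Proof.
move=> xs; have ix_lt := index_lt_size xs.
have [lt_Six | le_sSix] := ltnP (index x s).+1 (size s).
  exists (nth x s (index x s).+1).
  rewrite (arcs_on_out s_cycle xs) -set_index //; apply/setP => y; rewrite !inE.
  by apply: andb_id2l => ys; have := index_lt_size ys; rewrite /cycle_succ; lia.
exists (nth x s 0).
rewrite (arcs_on_out s_cycle xs) -set_index ?(leq_ltn_trans _ ix_lt) //.
apply/setP => y; rewrite !inE.
by apply: andb_id2l => ys; have := index_lt_size ys; rewrite /cycle_succ; lia.
Qed.

Lemma cycle_in_inj u v y : y \in s -> a u y -> a v y -> u = v.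
Proof.
move=> ys /(arcs_on_in s_cycle ys)/andP[us Ru] /(arcs_on_in s_cycle ys)/andP[vs Rv].
apply: (index_inj u us vs); move: Ru Rv; rewrite /cycle_succ.
by have := index_lt_size us; have := index_lt_size vs; lia.
Qed.

End Unidirectional.

Section Theta.
Variable s : seq V.
Hypotheses (s_uniq : uniq s) (s_ge3 : 3 <= size s).
Hypothesis s_theta : arcs_on s (theta_succ (size s)).

Let s_gt1 : 1 < size s := ltnW s_ge3.
Let last_lt : (size s).-1 < size s.
Proof. by rewrite ltn_predL ltnW. Qed.

Lemma theta_source_neq x0 : nth x0 s 1 != nth x0 s (size s).-1.
Proof. rewrite nth_uniq //; lia. Qed.

Lemma theta_source_out x0 :
  out_set a (nth x0 s 0) = [set nth x0 s 1; nth x0 s (size s).-1].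
Proof.
rewrite (arcs_on_out s_theta) ?mem_nth ?index_uniq ?(ltnW s_gt1) //.
rewrite -!(set_index s_uniq x0) ?prednK ?(ltnW s_gt1) //.
by apply/setP => y; rewrite !inE /theta_succ eqxx -andb_orr.
Qed.

Lemma theta_source_card u : u \in s -> index u s = 0 -> #|out_set a u| = 2.
Proof.
move=> us iu; rewrite -(nth_index u us) iu theta_source_out cards2.
by rewrite (negbTE (theta_source_neq u)).
Qed.

Lemma theta_sink_out x0 : out_set a (nth x0 s (size s).-1) = set0.
Proof.
rewrite (arcs_on_out s_theta) ?mem_nth ?index_uniq //.
apply/setP => y; rewrite !inE /theta_succ; apply/negbTE/andP => -[ys].
by have := index_lt_size ys; lia.
Qed.

Lemma theta_inner_out x : x \in s -> 0 < index x s < (size s).-1 ->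
  out_set a x = [set nth x s (index x s).+1].
Proof.
move=> xs ix_inner; rewrite (arcs_on_out s_theta xs) -set_index //; last by lia.
by apply/setP => y; rewrite !inE /theta_succ; apply: andb_id2l => _; lia.
Qed.

Lemma theta_in u v y : y \in s -> a u y -> a v y ->
  [\/ u = v, index u s = 0 | index v s = 0].
Proof.
move=> ys /(arcs_on_in s_theta ys)/andP[us Ru] /(arcs_on_in s_theta ys)/andP[vs Rv].
have [/(index_inj u us vs) -> | neq_uv] := eqVneq (index u s) (index v s).
  by constructor 1.
have : index u s = 0 \/ index v s = 0 by move: Ru Rv neq_uv; rewrite /theta_succ; lia.
by case=> ?; [constructor 2 | constructor 3].
Qed.

End Theta.

Section CycleComponents.
Hypothesis components_shape :
  forall C, C \in components a -> unidirectional a C \/ theta_oriented a C.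

Lemma unidirectional_out_set1 C x : C \in components a -> unidirectional a C ->
  x \in C -> exists y, out_set a x = [set y].
Proof.
move=> HC /(unidirectional_arcs_on HC) [s [s_uniq _ Cs s_cycle]] /Cs.
exact: cycle_out_set1.
Qed.

Lemma out_set1_or_theta v :
  (exists y, out_set a v = [set y]) \/ theta_oriented a (Defs.comp a v).
Proof.
have Cv := comp_in_components a v.
case: (components_shape Cv) => [uni | ]; last by right.
by left; apply: unidirectional_out_set1 Cv uni (comp_refl a v).
Qed.

Lemma theta_ends C : C \in components a -> theta_oriented a C ->
  exists h m l, [/\ out_set a h = [set m; l], m != l, out_set a l = set0, l \in C
    & forall x, x \in C -> [\/ x = h, x = l | exists y, out_set a x = [set y]]].
Proof.
move=> HC /(theta_arcs_on HC) [s [s_uniq s_ge3 Cs s_theta]].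
have [x0 _] : exists x, x \in s.
  by case: s {s_uniq Cs s_theta} s_ge3 => // x s' _; exists x; rewrite mem_head.
exists (nth x0 s 0), (nth x0 s 1), (nth x0 s (size s).-1); split.
- exact: theta_source_out.
- exact: theta_source_neq.
- exact: theta_sink_out.
- by apply/Cs; rewrite mem_nth // ltn_predL (leq_trans _ s_ge3).
move=> x /Cs xs; have := index_lt_size xs.
have [ix0 _ | ix_gt0] := posnP (index x s).
  by constructor 1; rewrite -ix0 nth_index.
have [ix_last _ | ix_nlast ix_lt] := eqVneq (index x s) (size s).-1.
  by constructor 2; rewrite -ix_last nth_index.
by constructor 3; exists (nth x s (index x s).+1); apply: theta_inner_out => //; lia.
Qed.

Lemma out_set1_inj u v y : out_set a u = [set y] -> out_set a v = [set y] -> u = v.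
Proof.
move=> Ou Ov.
have uy : a u y by move: (set11 y); rewrite -Ou inE.
have vy : a v y by move: (set11 y); rewrite -Ov inE.
have HC := comp_in_components a y.
case: (components_shape HC) => [/(unidirectional_arcs_on HC) | /(theta_arcs_on HC)]
  [s [s_uniq s_ge3 Cs s_arcs]]; have ys := proj1 (Cs y) (comp_refl a y).
  exact: cycle_in_inj s_uniq s_arcs _ _ _ ys uy vy.
have /andP[us _] := arcs_on_in s_arcs ys uy.
have /andP[vs _] := arcs_on_in s_arcs ys vy.
case: (theta_in s_uniq s_ge3 s_arcs ys uy vy) => [// | iu | iv].
  by have := theta_source_card s_uniq s_ge3 s_arcs us iu; rewrite Ou cards1.
by have := theta_source_card s_uniq s_ge3 s_arcs vs iv; rewrite Ov cards1.
Qed.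

End CycleComponents.
End CycleSequences.

Section Labelings.
Variable V : finType.
Implicit Types (f g : V -> nat) (x z : V).

Lemma labeling_enum_rank : labeling (fun x : V => (enum_rank x).+1).
Proof.
split; [|split] => [x y [/val_inj/enum_rank_inj] // | x | k /andP[k_gt0 k_le]].
  by rewrite ltn_ord.
have lt_k : k.-1 < #|V| by rewrite prednK.
by exists (enum_val (Ordinal lt_k)); rewrite enum_valK prednK.
Qed.

Lemma labeling_perm f (p : {perm V}) : labeling f -> labeling (f \o p).
Proof.
case=> f_inj [f_range f_onto]; split; [|split] => [x y /f_inj/perm_inj // | x | k /f_onto[x fx]].
  exact: f_range.
by exists ((p^-1)%g x); rewrite /= permKV.
Qed.

Lemma labeling_assign f x k : labeling f -> 1 <= k <= #|V| ->
  exists g, [/\ labeling g, g x = k & forall z, z != x -> f z != k -> g z = f z].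
Proof.
move=> lab_f /(proj2 (proj2 lab_f)) [y fy].
exists (f \o tperm x y); split=> [| | z zx fz]; first exact: labeling_perm.
  by rewrite /= tpermL.
have yz : y != z by apply: contraNneq fz => <-; rewrite fy.
by rewrite /= tpermD // eq_sym.
Qed.

Lemma labeling_top2 m l : m != l -> 1 < #|V| ->
  exists g, [/\ labeling g, g m = #|V| & g l = #|V|.-1].
Proof.
move=> ml V_gt1.
have top_in : 1 <= #|V| <= #|V| by rewrite leqnn ltnW.
have [g1 [lab_g1 g1m _]] := labeling_assign m labeling_enum_rank top_in.
have pred_in : 1 <= #|V|.-1 <= #|V| by lia.
have [g [lab_g gl g_other]] := labeling_assign l lab_g1 pred_in.
by exists g; split=> //; rewrite g_other ?g1m //; lia.
Qed.

End Labelings.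

Section Antimagic1.
Variables (V : finType) (a : rel V).
Hypotheses (V_gt1 : 1 < #|V|) (a_irr : forall x, ~~ a x x).
Hypothesis components_shape :
  forall C, C \in components a -> unidirectional a C \/ theta_oriented a C.

Lemma antimagic1_theta_unique C1 C2 : D_antimagic a (pred1 1) ->
  C1 \in components a -> C2 \in components a ->
  theta_oriented a C1 -> theta_oriented a C2 -> C1 = C2.
Proof.
case=> f [_ w_inj] HC1 HC2 th1 th2.
have [_ [_ [l1 [_ _ Ol1 l1C _]]]] := theta_ends HC1 th1.
have [_ [_ [l2 [_ _ Ol2 l2C _]]]] := theta_ends HC2 th2.
have l12 : l1 = l2 by apply: w_inj; rewrite !(weight1_set0 _ V_gt1 a_irr).
by rewrite (components_compE HC1 l1C) (components_compE HC2 l2C) l12.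
Qed.

Lemma weight1_set1_inj f u v x y : injective f ->
  out_set a u = [set x] -> out_set a v = [set y] ->
  weight a (pred1 1) f u = weight a (pred1 1) f v -> u = v.
Proof.
move=> f_inj Ou Ov.
rewrite (weight1_set1 _ V_gt1 a_irr Ou) (weight1_set1 _ V_gt1 a_irr Ov) => /f_inj xy.
by apply: (out_set1_inj components_shape Ou); rewrite xy.
Qed.

Lemma antimagic1_of_out_set1 :
  (forall v, exists y, out_set a v = [set y]) -> D_antimagic a (pred1 1).
Proof.
move=> single; exists (fun x => (enum_rank x).+1).
split=> [|u v]; first exact: labeling_enum_rank.
have [[x Ou] [y Ov]] := (single u, single v).
by apply: (weight1_set1_inj _ Ou Ov) => p q [/val_inj/enum_rank_inj].
Qed.

Lemma antimagic1_of_theta_ends h m l :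
  out_set a h = [set m; l] -> m != l -> out_set a l = set0 ->
  (forall v, [\/ v = h, v = l | exists y, out_set a v = [set y]]) ->
  D_antimagic a (pred1 1).
Proof.
move=> Oh ml Ol ends.
have [g [lab_g gm gl]] := labeling_top2 ml V_gt1.
have [g_inj [g_range _]] := lab_g.
exists g; split=> //.
have wh : weight a (pred1 1) g h = (2 * #|V|).-1.
  by rewrite (weight1_set2 _ V_gt1 a_irr Oh ml) gm gl; lia.
have wl := weight1_set0 g V_gt1 a_irr Ol.
have w_set1 v y : out_set a v = [set y] -> 0 < weight a (pred1 1) g v <= #|V|.
  by move=> Ov; rewrite (weight1_set1 _ V_gt1 a_irr Ov) g_range.
move=> u v; case: (ends u) => [->|->|[x Ou]]; case: (ends v) => [->|->|[y Ov]] //.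
- by rewrite wh wl; lia.
- by have := w_set1 _ _ Ov; rewrite wh; lia.
- by rewrite wh wl; lia.
- by have := w_set1 _ _ Ov; rewrite wl; lia.
- by have := w_set1 _ _ Ou; rewrite wh; lia.
- by have := w_set1 _ _ Ou; rewrite wl; lia.
exact: weight1_set1_inj g_inj Ou Ov.
Qed.

End Antimagic1.

Theorem mainTheorem17 (V : finType) (a : rel V) :
  oriented a -> two_regular a ->
  2 <= #|components a| ->
  (forall C, C \in components a -> unidirectional a C \/ theta_oriented a C) ->
  (D_antimagic a (pred1 1) <->
   forall C1 C2, C1 \in components a -> C2 \in components a ->
     theta_oriented a C1 -> theta_oriented a C2 -> C1 = C2).
Proof.
move=> [a_irr _] _ comps_ge2 shape.
have V_gt1 : 1 < #|V| := leq_trans comps_ge2 (leq_imset_card _ _).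
split=> [antimagic C1 C2 | theta_unique]; first exact: antimagic1_theta_unique.
have [[C0 HC0 th0] | no_theta] :=
  classic (exists2 C, C \in components a & theta_oriented a C).
  have [h [m [l [Oh ml Ol _ C0_ends]]]] := theta_ends HC0 th0.
  apply: (antimagic1_of_theta_ends V_gt1 a_irr shape Oh ml Ol) => v.
  case: (out_set1_or_theta shape v) => [? | th]; first by constructor 3.
  apply: C0_ends; rewrite (theta_unique _ _ HC0 (comp_in_components a v) th0 th).
  exact: comp_refl.
apply: (antimagic1_of_out_set1 V_gt1 a_irr shape) => v.
case: (out_set1_or_theta shape v) => // th; case: no_theta.
by exists (Defs.comp a v); first exact: comp_in_components.
Qed.
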